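(* Let $\rho\in(0,1)$, $h>0$, $\delta\ge0$, and $\hat S_\rho=(I+\rho^{-2}\widehat\Pi)^{1/2}$. If $\operatorname{tr}\big((I-\widehat\Pi)\Pi^*\big)\le\delta^2$, then for every $x\in\mathbb R^d$, $|\hat S_\rho x|\le h$ implies $|\Pi^*x|\le(\rho+\delta)h$.
   Context: $\Pi^*$ is the orthogonal projector onto an $m^*$-dimensional subspace of $\mathbb R^d$. $I$ is the $d\times d$ identity, $|\cdot|$ the Euclidean norm, $A\preceq B$ means $B-A$ is positive semidefinite. Let $\hat\beta_1,\dots,\hat\beta_L\in\mathbb R^d$ be arbitrary vectors, $\mathcal A_{m^*}=\{\Pi\in\mathbb R^{d\times d}:\Pi=\Pi^\top,\ 0\preceq\Pi\preceq I,\ \operatorname{tr}\Pi\le m^*\}$, and let $\widehat\Pi$ be a minimizer over $\Pi\in\mathcal A_{m^*}$ of $\max_\ell\hat\beta_\ell^\top(I-\Pi)\hat\beta_\ell$. Square roots are positive semidefinite square roots. *)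

From HB Require Import structures.
From mathcomp Require Import all_boot all_order all_algebra.
From mathcomp Require Import reals.
Set Implicit Arguments. Unset Strict Implicit. Unset Printing Implicit Defensive.
Import Order.TTheory GRing.Theory Num.Theory.
Local Open Scope ring_scope.

Section Defs.
Variable R : realType.

Definition vnorm d (x : 'cV[R]_d) : R := Num.sqrt ((x^T *m x) 0 0).

Definition qform d (A : 'M[R]_d) (x : 'cV[R]_d) : R := (x^T *m A *m x) 0 0.

Definition psd d (A : 'M[R]_d) : Prop :=
  A^T = A /\ forall x : 'cV[R]_d, 0 <= qform A x.

Definition loewner_le d (A B : 'M[R]_d) : Prop := psd (B - A).

Definition orth_proj d (m : nat) (P : 'M[R]_d) : Prop :=
  P^T = P /\ P *m P = P /\ \rank P = m.

Definition setA d (m : nat) (P : 'M[R]_d) : Prop :=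
  P^T = P /\ loewner_le 0 P /\ loewner_le P 1%:M /\ \tr P <= m%:R.

(* Objective: max_l beta_l^T (I - P) beta_l  (values are >= 0 on setA, so the
   default 0 of the big max is harmless; for L = 0 the objective is 0). *)
Definition objective d L (beta : 'I_L -> 'cV[R]_d) (P : 'M[R]_d) : R :=
  \big[Num.max/0]_(l < L) qform (1%:M - P) (beta l).

Definition is_minimizer d (m : nat) L (beta : 'I_L -> 'cV[R]_d) (P : 'M[R]_d) : Prop :=
  setA m P /\ forall Q : 'M[R]_d, setA m Q -> objective beta P <= objective beta Q.

End Defs.

(* Split [Pistar x = Pistar (Pihat x) + Pistar ((I - Pihat) x)].  Since
   [|Shat x|^2 = |x|^2 + rho^-2 x^T Pihat x <= h^2], both [|x| <= h] and
   [x^T Pihat x <= (rho h)^2]; as [0 <= Pihat <= I], [|Pihat x|^2 <= x^T Pihat x],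
   so the first part has norm at most [rho h].  For [y = Pistar (I - Pihat) x]
   one has [|y|^2 = y^T (I - Pihat) x]; Cauchy-Schwarz for the form [I - Pihat]
   and [y^T (I - Pihat) y <= tr (Pistar (I - Pihat) Pistar) |y|^2 <= delta^2 |y|^2]
   give [|y| <= delta |x| <= delta h]. *)
From HB Require Import structures.
From mathcomp Require Import all_boot all_order all_algebra.
From mathcomp Require Import reals.
From mathcomp Require Import ring lra.
Import Order.TTheory GRing.Theory Num.Theory.
Local Open Scope ring_scope.

Lemma le_of_sqr_le_mul (R : realDomainType) (t c : R) :
  0 <= c -> t ^+ 2 <= c * t -> t <= c.
Proof. by move=> c_ge0 tc; nra. Qed.

Lemma quad_ge0_discr (R : realFieldType) (a b c : R) : 0 <= c ->
  (forall t, 0 <= a + 2 * b * t + c * t ^+ 2) -> b ^+ 2 <= a * c.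
Proof.
move=> c_ge0 quad_ge0; have [c0|c_neq0] := eqVneq c 0.
  have [->|b_neq0] := eqVneq b 0; first by rewrite expr0n /= c0 mulr0.
  have := quad_ge0 (- (a + 1) / (2 * b)).
  have -> : a + 2 * b * (- (a + 1) / (2 * b)) + c * (- (a + 1) / (2 * b)) ^+ 2 = -1.
    by rewrite c0; field.
  by rewrite ler0N1.
have c_gt0 : 0 < c by rewrite lt0r c_neq0.
have := quad_ge0 (- b / c).
have -> : a + 2 * b * (- b / c) + c * (- b / c) ^+ 2 = a - b ^+ 2 / c by field.
by rewrite subr_ge0 ler_pdivrMr.
Qed.

Section QuadraticForms.
Context {R : realType} {d : nat}.
Implicit Types (M A B C P S : 'M[R]_d) (u v x z : 'cV[R]_d).

Definition bform M u v : R := (u^T *m M *m v) 0 0.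

Lemma qformE M x : qform M x = \sum_j \sum_i x i 0 * M i j * x j 0.
Proof.
rewrite /qform mxE; apply: eq_bigr => j _; rewrite mxE big_distrl /=.
by apply: eq_bigr => i _; rewrite mxE.
Qed.

Lemma qform1E x : qform 1%:M x = \sum_i x i 0 ^+ 2.
Proof. by rewrite /qform mulmx1 mxE; apply: eq_bigr => i _; rewrite mxE expr2. Qed.

Lemma qform1_ge0 x : 0 <= qform 1%:M x.
Proof. by rewrite qform1E; apply: sumr_ge0 => i _; apply: sqr_ge0. Qed.

Lemma vnorm_ge0 x : 0 <= vnorm x.
Proof. exact: sqrtr_ge0. Qed.

Lemma sqr_vnorm x : vnorm x ^+ 2 = qform 1%:M x.
Proof. by rewrite sqr_sqrtr -(mulmx1 x^T) ?qform1_ge0. Qed.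

Lemma qformD M1 M2 x : qform (M1 + M2) x = qform M1 x + qform M2 x.
Proof. by rewrite /qform mulmxDr mulmxDl mxE. Qed.

Lemma qformZ a M x : qform (a *: M) x = a * qform M x.
Proof. by rewrite /qform -scalemxAr -scalemxAl mxE. Qed.

Lemma qformN M x : qform (- M) x = - qform M x.
Proof. by rewrite -scaleN1r qformZ mulN1r. Qed.

Lemma qform_mulmx M C z : qform M (C *m z) = qform (C^T *m M *m C) z.
Proof. by rewrite /qform trmx_mul !mulmxA. Qed.

Lemma qform_comb M a b u v : M^T = M ->
  qform M (a *: u + b *: v) =
  a ^+ 2 * qform M u + 2 * a * b * bform M u v + b ^+ 2 * qform M v.
Proof.
move=> M_sym; rewrite /qform [(_ + _)^T]linearD /= ![(_ *: _)^T]linearZ /=.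
rewrite !mulmxDl !mulmxDr -!scalemxAl -!scalemxAr.
have -> : v^T *m M *m u = (u^T *m M *m v)^T by rewrite !trmx_mul trmxK M_sym mulmxA.
by rewrite /bform !mxE; ring.
Qed.

Lemma bform_delta M (i j : 'I_d) : bform M (delta_mx i 0) (delta_mx j 0) = M i j.
Proof. by rewrite /bform trmx_delta -mulmxA -colE -rowE !mxE. Qed.

Lemma qform_delta M (i : 'I_d) : qform M (delta_mx i 0) = M i i.
Proof. exact: bform_delta. Qed.

Lemma psd_cauchy_schwarz M u v : psd M ->
  bform M u v ^+ 2 <= qform M u * qform M v.
Proof.
move=> [M_sym M_ge0]; apply: quad_ge0_discr => // t.
have := M_ge0 (1 *: u + t *: v); rewrite qform_comb //; lra.
Qed.

Lemma psd1 : psd (1%:M : 'M[R]_d).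
Proof. by split; [exact: trmx1 | exact: qform1_ge0]. Qed.

Lemma vnormD u v : vnorm (u + v) <= vnorm u + vnorm v.
Proof.
have := psd_cauchy_schwarz 1%:M u v psd1; rewrite -!sqr_vnorm -exprMn => cs.
have uv_ge0 : 0 <= vnorm u * vnorm v by rewrite mulr_ge0 ?vnorm_ge0.
have b_le : bform 1%:M u v <= vnorm u * vnorm v by nra.
rewrite -ler_sqr ?nnegrE ?addr_ge0 ?vnorm_ge0 // sqr_vnorm.
have -> : u + v = 1 *: u + 1 *: v by rewrite !scale1r.
rewrite qform_comb ?trmx1 // -!sqr_vnorm; nra.
Qed.

Lemma psd_mul_entry_le M (i j : 'I_d) (a b : R) : psd M ->
  2 * (a * M i j * b) <= a ^+ 2 * M j j + b ^+ 2 * M i i.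
Proof.
move=> [M_sym M_ge0]; have := M_ge0 (b *: delta_mx i 0 + (- a) *: delta_mx j 0).
by rewrite qform_comb // !qform_delta bform_delta; nra.
Qed.

Lemma psd_qform_le_trace M v : psd M -> qform M v <= \tr M * vnorm v ^+ 2.
Proof.
move=> M_psd.
have trace_sum : \sum_j \sum_i v j 0 ^+ 2 * M i i = \tr M * vnorm v ^+ 2.
  rewrite sqr_vnorm qform1E mulrC mulr_suml; apply: eq_bigr => j _.
  by rewrite /mxtrace mulr_sumr.
suff : 2 * qform M v <= 2 * (\tr M * vnorm v ^+ 2) by lra.
rewrite qformE mulr_sumr.
apply: (@le_trans _ _ (\sum_j \sum_i (v i 0 ^+ 2 * M j j + v j 0 ^+ 2 * M i i))).
  apply: ler_sum => j _; rewrite mulr_sumr; apply: ler_sum => i _.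
  exact: psd_mul_entry_le.
under eq_bigr => j _ do rewrite big_split.
by rewrite big_split /= [X in X + _]exchange_big /= trace_sum; lra.
Qed.

Lemma psd_conj M C : psd M -> psd (C^T *m M *m C).
Proof.
move=> [M_sym M_ge0]; split; first by rewrite !trmx_mul trmxK M_sym mulmxA.
by move=> z; rewrite -qform_mulmx.
Qed.

Lemma sqr_vnorm_sqrt_mul S A c x : S^T = S -> S *m S = 1%:M + c *: A ->
  vnorm (S *m x) ^+ 2 = vnorm x ^+ 2 + c * qform A x.
Proof.
by move=> S_sym S_sq; rewrite !sqr_vnorm qform_mulmx mulmx1 S_sym S_sq qformD qformZ.
Qed.

Lemma sqr_vnorm_proj P z : P^T = P -> P *m P = P ->
  vnorm (P *m z) ^+ 2 = qform P z.
Proof. by move=> P_sym P_idem; rewrite sqr_vnorm qform_mulmx mulmx1 P_sym P_idem. Qed.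

Lemma proj_vnorm_le P z : P^T = P -> P *m P = P -> vnorm (P *m z) <= vnorm z.
Proof.
move=> P_sym P_idem; rewrite -ler_sqr ?nnegrE ?vnorm_ge0 //.
have Q_sym : (1%:M - P)^T = 1%:M - P by rewrite linearB /= trmx1 P_sym.
have Q_idem : (1%:M - P) *m (1%:M - P) = 1%:M - P.
  by rewrite mulmxBl mul1mx mulmxBr mulmx1 P_idem subrr subr0.
rewrite !sqr_vnorm_proj // sqr_vnorm -[X in _ <= qform X _](subrK P) qformD lerDr.
by rewrite -sqr_vnorm_proj ?sqr_ge0.
Qed.

Lemma sqr_vnorm_mul_le_qform A x : psd A -> psd (1%:M - A) ->
  vnorm (A *m x) ^+ 2 <= qform A x.
Proof.
move=> A_psd [_ IA_ge0]; have [A_sym A_ge0] := A_psd.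
have Ax_sqr : vnorm (A *m x) ^+ 2 = bform A x (A *m x).
  by rewrite sqr_vnorm /qform /bform mulmx1 trmx_mul A_sym mulmxA.
have qAx_le : qform A (A *m x) <= vnorm (A *m x) ^+ 2.
  by have := IA_ge0 (A *m x); rewrite qformD qformN -sqr_vnorm subr_ge0.
have := psd_cauchy_schwarz A x (A *m x) A_psd; rewrite -Ax_sqr => cs.
apply: le_of_sqr_le_mul; first exact: A_ge0.
exact: le_trans cs (ler_wpM2l (A_ge0 x) qAx_le).
Qed.

Lemma sqr_vnorm_proj_mul_le P B x c :
  P^T = P -> P *m P = P -> psd B -> \tr (B *m P) <= c -> 0 <= c ->
  vnorm (P *m (B *m x)) ^+ 2 <= c * qform B x.
Proof.
move=> P_sym P_idem B_psd tr_le c_ge0; have [_ B_ge0] := B_psd.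
set y := P *m (B *m x).
have Py : P *m y = y by rewrite /y mulmxA P_idem.
have yP : y^T *m P = y^T by rewrite -{1}P_sym -trmx_mul Py.
have y_sqr : vnorm y ^+ 2 = bform B y x.
  by rewrite sqr_vnorm /qform /bform mulmx1 {2}/y !mulmxA yP.
have qBy_le : qform B y <= c * vnorm y ^+ 2.
  rewrite -{1}Py qform_mulmx.
  apply: le_trans (psd_qform_le_trace _ y (psd_conj _ P B_psd)) _.
  rewrite ler_wpM2r ?sqr_ge0 //.
  by rewrite P_sym mxtrace_mulC mulmxA P_idem mxtrace_mulC.
have := psd_cauchy_schwarz B y x B_psd; rewrite -y_sqr => cs.
apply: le_of_sqr_le_mul; first by rewrite mulr_ge0.
by apply: (le_trans cs); rewrite mulrAC ler_wpM2r.
Qed.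

End QuadraticForms.

Theorem corollary4 (R : realType) (d mstar L : nat)
    (Pistar : 'M[R]_d) (beta : 'I_L -> 'cV[R]_d) (Pihat : 'M[R]_d)
    (rho h delta : R) (Shat : 'M[R]_d) :
  orth_proj mstar Pistar ->
  is_minimizer mstar beta Pihat ->
  0 < rho -> rho < 1 -> 0 < h -> 0 <= delta ->
  (* Shat is the PSD square root of I + rho^-2 Pihat *)
  psd Shat -> Shat *m Shat = 1%:M + rho ^-2 *: Pihat ->
  \tr ((1%:M - Pihat) *m Pistar) <= delta ^+ 2 ->
  forall x : 'cV[R]_d,
    vnorm (Shat *m x) <= h -> vnorm (Pistar *m x) <= (rho + delta) * h.
Proof.
move=> [P_sym [P_idem _]] [[_ [A_ge0 [IA_psd _]]] _] rho_gt0 _ h_gt0 delta_ge0.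
move=> [S_sym _] S_sq tr_le x Sx_le.
have A_psd : psd Pihat by move: A_ge0; rewrite /loewner_le subr0.
have qA_ge0 : 0 <= qform Pihat x := A_psd.2 x.
have rho2_gt0 : 0 < rho ^-2 by rewrite invr_gt0 exprn_gt0.
have : vnorm (Shat *m x) ^+ 2 <= h ^+ 2.
  by rewrite ler_sqr ?nnegrE ?vnorm_ge0 ?(ltW h_gt0).
rewrite (sqr_vnorm_sqrt_mul _ _ _ x S_sym S_sq) => Sx_sqr_le.
have x_sqr_ge0 := sqr_ge0 (vnorm x).
have qA_scaled_ge0 := mulr_ge0 (ltW rho2_gt0) qA_ge0.
have x_sqr_le : vnorm x ^+ 2 <= h ^+ 2 by lra.
have qA_le : qform Pihat x <= (rho * h) ^+ 2.
  rewrite -(ler_pM2l rho2_gt0) exprMn mulrA mulVf ?mul1r ?expf_neq0 ?gt_eqF //; lra.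
have a_le : vnorm (Pistar *m (Pihat *m x)) <= rho * h.
  apply: le_trans (proj_vnorm_le _ _ P_sym P_idem) _.
  rewrite -ler_sqr ?nnegrE ?vnorm_ge0 ?mulr_ge0 ?(ltW h_gt0) ?(ltW rho_gt0) //.
  exact: le_trans (sqr_vnorm_mul_le_qform _ x A_psd IA_psd) qA_le.
have y_le : vnorm (Pistar *m ((1%:M - Pihat) *m x)) <= delta * h.
  rewrite -ler_sqr ?nnegrE ?vnorm_ge0 ?mulr_ge0 ?(ltW h_gt0) // exprMn.
  apply: le_trans (sqr_vnorm_proj_mul_le _ _ x _ P_sym P_idem IA_psd tr_le (sqr_ge0 _)) _.
  by rewrite ler_wpM2l ?sqr_ge0 // qformD qformN -sqr_vnorm; lra.
have -> : Pistar *m x = Pistar *m (Pihat *m x) + Pistar *m ((1%:M - Pihat) *m x).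
  by rewrite -mulmxDr -mulmxDl addrC subrK mul1mx.
by rewrite mulrDl; apply: le_trans (vnormD _ _) (lerD a_le y_le).
Qed.
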